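(* Let $(M,d)$ be a $\mathrm{CAT}(0)$ space, $x_1,\dots,x_n\in M$, $b_n$ their barycenter (the unique minimizer of $b\mapsto\frac1n\sum_i d(x_i,b)^2$), and $D$ the diameter of $\{x_1,\dots,x_n\}$. Let $I_1,\dots,I_m$ be i.i.d. uniform on $\{1,\dots,n\}$, $X_k=x_{I_k}$, and $\tilde b_m=\tilde B_m^{(t)}(X_1,\dots,X_m)$ with $t=(1/2,1/3,\dots,1/m)$. Let $\eta>0$ and $\delta\in(0,1)$. If $m\ge\frac{4D^2}{\eta^2}\max(1,\log(1/\delta))$, then $d(\tilde b_m,b_n)\le\eta$ with probability at least $1-\delta$.
   Context: A $\mathrm{CAT}(0)$ space is a complete geodesic metric space in which every geodesic triangle is no fatter than its Euclidean comparison triangle; geodesics are unique. Iterated barycenter: for $t=(t_2,\dots,t_m)\in(0,1)^{m-1}$, set $\tilde b_1=x_1$ and $\tilde b_k=\gamma_k(t_k)$ where $\gamma_k:[0,1]\to M$ is the constant-speed geodesic from $\tilde b_{k-1}$ to $x_k$; $\tilde B_m^{(t)}(x_1,\dots,x_m)=\tilde b_m$. *)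

From HB Require Import structures.
From mathcomp Require Import all_boot all_order all_algebra.
From mathcomp Require Import all_classical all_reals exp.
Set Implicit Arguments. Unset Strict Implicit. Unset Printing Implicit Defensive.
Import Order.TTheory GRing.Theory Num.Theory.
Local Open Scope ring_scope.

Section CAT0.
Variables (R : realType) (M : Type) (d : M -> M -> R).

Definition is_metric : Prop :=
  (forall x y, 0 <= d x y) /\ (forall x y, d x y = 0 <-> x = y) /\
  (forall x y, d x y = d y x) /\ (forall x y z, d x z <= d x y + d y z).

Definition is_complete : Prop :=
  forall u : nat -> M,
    (forall e, 0 < e -> exists N, forall p q, (N <= p)%N -> (N <= q)%N ->
        d (u p) (u q) < e) ->
    exists l, forall e, 0 < e -> exists N, forall p, (N <= p)%N -> d (u p) l < e.

(* constant-speed geodesic g : [0,1] -> M from x to y (values outside [0,1]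
   are irrelevant) *)
Definition is_geodesic (g : R -> M) (x y : M) : Prop :=
  g 0 = x /\ g 1 = y /\
  forall s t, 0 <= s <= 1 -> 0 <= t <= 1 -> d (g s) (g t) = `|s - t| * d x y.

(* CAT(0) comparison: for a geodesic triangle x y z, points p = g1 s on [x,y]
   and q = g2 u on [x,z]; the squared distance of the comparison points in the
   Euclidean comparison triangle is (law of cosines)
   s^2 d(x,y)^2 + u^2 d(x,z)^2 - s u (d(x,y)^2 + d(x,z)^2 - d(y,z)^2). *)
Definition cat0_comparison : Prop :=
  forall x y z (g1 g2 : R -> M) s u,
    is_geodesic g1 x y -> is_geodesic g2 x z ->
    0 <= s <= 1 -> 0 <= u <= 1 ->
    d (g1 s) (g2 u) ^+ 2 <=
      s ^+ 2 * d x y ^+ 2 + u ^+ 2 * d x z ^+ 2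
      - s * u * (d x y ^+ 2 + d x z ^+ 2 - d y z ^+ 2).

Definition is_CAT0 : Prop :=
  [/\ is_metric, is_complete, (forall x y, exists g, is_geodesic g x y)
    & cat0_comparison].

(* iterated barycenter: geo x y is the geodesic from x to y, t k = t_k.
   iter_bary_aux k b s : current point b = b~_k, remaining points s. *)
Fixpoint iter_bary_aux (geo : M -> M -> R -> M) (t : nat -> R)
    (k : nat) (b : M) (s : seq M) : M :=
  match s with
  | [::] => b
  | y :: s' => iter_bary_aux geo t k.+1 (geo b y (t k.+1)) s'
  end.

(* B~^(t)(x_1,...,x_m) for s = [:: x_1; ...; x_m]; dflt is only returned on
   the empty sequence *)
Definition iter_bary (geo : M -> M -> R -> M) (t : nat -> R) (dflt : M)
    (s : seq M) : M :=
  match s with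
  | [::] => dflt
  | x1 :: s' => iter_bary_aux geo t 1 x1 s'
  end.

End CAT0.

From HB Require Import structures.
From mathcomp Require Import all_boot all_order all_algebra.
From mathcomp Require Import all_classical all_reals exp.
From mathcomp Require Import ring lra interval_inference topology normedtype.
From mathcomp Require Import sequences derive convex.
Import Order.TTheory GRing.Theory Num.Theory numFieldNormedType.Exports.
Set Implicit Arguments. Unset Strict Implicit. Unset Printing Implicit Defensive.
Local Open Scope ring_scope.

(* Write F(w) = (1/n) sum_i d(x_i, w)^2, which b minimises.  Convexity of
   d(., b)^2 along geodesics and the variance inequality
   F(b) + d(b, w)^2 <= F(w) give Sturm's law of large numbers
   E d(b~_m, b)^2 <= F(b) / m <= D^2 / (2m).  Moving one endpoint of a geodesic
   moves its point at time t by at most t (resp. 1 - t) times the displacement,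
   so replacing one draw X_k moves b~_m by at most D/m, and McDiarmid's
   inequality gives a Gaussian tail above the mean E d(b~_m, b), which is at
   most eta / sqrt 12 when log(1/delta) >= 3/2.  For smaller log(1/delta),
   Chebyshev's inequality already suffices. *)

Section Averages.
Variables (R : realFieldType) (n : nat).

Definition mean (f : 'I_n -> R) : R := n%:R^-1 * \sum_i f i.

(* [avg k G] is the expectation of [G s] for [s] uniformly distributed among
   the sequences of length [k] over ['I_n]. *)
Fixpoint avg (k : nat) (G : seq 'I_n -> R) : R :=
  if k is k'.+1 then mean (fun i => avg k' (fun s => G (i :: s))) else G [::].

Lemma ler_mean (f g : 'I_n -> R) : (forall i, f i <= g i) -> mean f <= mean g.
Proof.
move=> fg; apply: ler_wpM2l; first by rewrite invr_ge0 ler0n.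
by apply: ler_sum => i _.
Qed.

Lemma meanD (f g : 'I_n -> R) : mean (fun i => f i + g i) = mean f + mean g.
Proof. by rewrite /mean big_split mulrDr. Qed.

Lemma meanB (f g : 'I_n -> R) : mean (fun i => f i - g i) = mean f - mean g.
Proof. by rewrite /mean sumrB mulrBr. Qed.

Lemma meanZ (a : R) (f : 'I_n -> R) : mean (fun i => a * f i) = a * mean f.
Proof. by rewrite /mean -mulr_sumr mulrCA. Qed.

Hypothesis n_gt0 : (0 < n)%N.

Lemma mean_cst (a : R) : mean (fun=> a) = a.
Proof.
by rewrite /mean sumr_const card_ord -[a *+ _]mulr_natl mulKf // pnatr_eq0 -lt0n.
Qed.

Lemma mean_dev_le (f : 'I_n -> R) (c : R) :
  (forall i j, `|f i - f j| <= c) -> forall i, `|f i - mean f| <= c.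
Proof.
move=> f_c i.
rewrite -[f i](mean_cst) -meanB /mean normrM ger0_norm ?invr_ge0 ?ler0n //.
rewrite -[leRHS](mean_cst c); apply: ler_wpM2l; first by rewrite invr_ge0 ler0n.
by apply: le_trans (ler_norm_sum _ _ _) _; apply: ler_sum => j _.
Qed.

Lemma ler_avg k (G H : seq 'I_n -> R) :
  (forall s, size s = k -> G s <= H s) -> avg k G <= avg k H.
Proof.
elim: k G H => [|k IHk] G H GH /=; first exact: GH.
by apply: ler_mean => i; apply: IHk => s sk; apply: GH; rewrite /= sk.
Qed.

Lemma eq_avg k (G H : seq 'I_n -> R) :
  (forall s, size s = k -> G s = H s) -> avg k G = avg k H.
Proof. by move=> GH; apply/le_anti; rewrite !ler_avg // => s /GH ->. Qed.

Lemma avgD k (G H : seq 'I_n -> R) :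
  avg k (fun s => G s + H s) = avg k G + avg k H.
Proof.
elim: k G H => [|k IHk] G H //=; rewrite -meanD.
by congr mean; apply/funext => i; apply: IHk.
Qed.

Lemma avgB k (G H : seq 'I_n -> R) :
  avg k (fun s => G s - H s) = avg k G - avg k H.
Proof.
elim: k G H => [|k IHk] G H //=; rewrite -meanB.
by congr mean; apply/funext => i; apply: IHk.
Qed.

Lemma avgZ k (a : R) (G : seq 'I_n -> R) :
  avg k (fun s => a * G s) = a * avg k G.
Proof.
elim: k G => [|k IHk] G //=; rewrite -meanZ.
by congr mean; apply/funext => i; apply: IHk.
Qed.

Lemma avg_cst k (a : R) : avg k (fun=> a) = a.
Proof. by elim: k => //= k IHk; rewrite IHk mean_cst. Qed.

Lemma avg_ge0 k (G : seq 'I_n -> R) : (forall s, 0 <= G s) -> 0 <= avg k G.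
Proof. by move=> G_ge0; rewrite -(avg_cst k 0); apply: ler_avg. Qed.

Lemma sqr_avg_le k (G : seq 'I_n -> R) : avg k G ^+ 2 <= avg k (fun s => G s ^+ 2).
Proof.
set mu := avg k G.
have : 0 <= avg k (fun s => G s ^+ 2 + (- (2 * mu)) * G s + mu ^+ 2).
  apply: avg_ge0 => s.
  by rewrite (_ : _ + _ = (G s - mu) ^+ 2) ?sqr_ge0 //; ring.
rewrite !avgD avgZ avg_cst -/mu; lra.
Qed.

Lemma chebyshev_avg k (G : seq 'I_n -> R) (a : R) : 0 < a ->
  avg k (fun s => (a < G s)%R%:R) * a ^+ 2 <= avg k (fun s => G s ^+ 2).
Proof.
move=> a_gt0; rewrite mulrC -avgZ; apply: ler_avg => s _.
case: ltP => [a_lt|_] /=; last by rewrite mulr0 sqr_ge0.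
by rewrite mulr1 lerXn2r ?nnegrE ?ltW // (lt_trans a_gt0).
Qed.

Definition ffun_cons k (p : 'I_n * {ffun 'I_k -> 'I_n}) : {ffun 'I_k.+1 -> 'I_n} :=
  [ffun j => if unlift ord0 j is Some j' then p.2 j' else p.1].

Lemma ffun_cons_bij k : bijective (@ffun_cons k).
Proof.
exists (fun I : {ffun 'I_k.+1 -> 'I_n} => (I ord0, [ffun j : 'I_k => I (lift ord0 j)])).
  case=> i J; congr pair; first by rewrite ffunE unlift_none.
  by apply/ffunP => j; rewrite !ffunE liftK.
move=> I; apply/ffunP => j; rewrite ffunE /=.
by case: unliftP => [j' ->|->]; rewrite ?ffunE.
Qed.

Lemma map_ffun_cons k p :
  [seq ffun_cons p j | j <- enum 'I_k.+1] = p.1 :: [seq p.2 j | j <- enum 'I_k].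
Proof.
rewrite enum_ordSl /= ffunE unlift_none; congr cons.
by rewrite -map_comp; apply: eq_map => j /=; rewrite ffunE liftK.
Qed.

Lemma sum_ffun_avg k (G : seq 'I_n -> R) :
  \sum_(I : {ffun 'I_k -> 'I_n}) G [seq I j | j <- enum 'I_k] = n%:R ^+ k * avg k G.
Proof.
elim: k G => [|k IHk] G.
  rewrite (_ : enum 'I_0 = [::]); last by apply/size0nil; rewrite size_enum_ord.
  by rewrite /= sumr_const card_ffun !card_ord mul1r.
rewrite (reindex (@ffun_cons k)); last exact/onW_bij/ffun_cons_bij.
under eq_bigr do rewrite map_ffun_cons.
rewrite -(pair_big xpredT xpredT
  (fun i (J : {ffun 'I_k -> 'I_n}) => G (i :: [seq J j | j <- enum 'I_k]))) /=.
under eq_bigr => i _ do rewrite (IHk (fun s => G (i :: s))).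
rewrite -mulr_sumr /mean exprS; field.
by rewrite pnatr_eq0 -lt0n.
Qed.

Lemma card_ffun_avg k (P : pred (seq 'I_n)) (A : {set {ffun 'I_k -> 'I_n}}) :
  (forall I, (I \in A) = P [seq I j | j <- enum 'I_k]) ->
  #|A|%:R / #|{: {ffun 'I_k -> 'I_n}}|%:R = avg k (fun s => (P s)%:R).
Proof.
move=> AP.
rewrite card_ffun !card_ord natrX -sum1_card natr_sum big_mkcond /=.
rewrite (eq_bigr (fun I : {ffun 'I_k -> 'I_n} => (P [seq I j | j <- enum 'I_k])%:R));
  last first.
  by move=> I _; rewrite AP; case: (P _).
rewrite (sum_ffun_avg k (fun s => (P s)%:R)) mulrC mulKf //.
by rewrite expf_neq0 // pnatr_eq0 -lt0n.
Qed.

End Averages.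

Section ExpInequalities.
Variable R : realType.
Local Open Scope classical_set_scope.

Lemma ler_is_derive_ge0 (f df : R -> R) (a : R) : 0 <= a ->
  (forall x : R, is_derive x 1 f (df x)) -> (forall x, 0 <= x <= a -> 0 <= df x) ->
  f 0 <= f a.
Proof.
move=> a_ge0 f_df df_ge0.
have f_cont : {within `[0, a], continuous f}.
  by apply: derivable_within_continuous => x _; case: (f_df x).
have [c /[!in_itv] /= /andP[c_ge0 c_le] E] :=
  @MVT_segment R f df 0 a a_ge0 (fun x _ => f_df x) f_cont.
by rewrite -subr_ge0 E mulr_ge0 ?subr0 // df_ge0 // c_ge0.
Qed.

Lemma sinh_le_mul_cosh (a : R) : 0 <= a ->
  expR a - expR (- a) <= a * (expR a + expR (- a)).
Proof.
move=> a_ge0.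
pose f := fun y : R => y * (expR y + expR (- y)) - (expR y - expR (- y)).
have f_df (x : R) : is_derive x 1 f (x * (expR x - expR (- x))).
  by apply: is_derive_eq; rewrite -[LHS]/(x * _ + _ * 1 - _); ring.
have df_ge0 y : 0 <= y <= a -> 0 <= y * (expR y - expR (- y)).
  by move=> /andP[y_ge0 _]; rewrite mulr_ge0 // subr_ge0 ler_expR; lra.
have := ler_is_derive_ge0 a_ge0 f_df df_ge0.
by rewrite /f mul0r oppr0 expR0; lra.
Qed.

Lemma cosh_le_expR_sqr (a : R) : expR a + expR (- a) <= 2 * expR (a ^+ 2 / 2).
Proof.
wlog a_ge0 : a / 0 <= a.
  move=> ge0_case; have [/ge0_case//|a_lt0] := leP 0 a.
  by have := ge0_case (- a); rewrite opprK sqrrN addrC; apply; lra.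
rewrite expr2.
pose f := fun y : R => - ((expR y + expR (- y)) * expR (- (y * y / 2))).
have f_df (x : R) : is_derive x 1 f
    ((x * (expR x + expR (- x)) - (expR x - expR (- x))) * expR (- (x * x / 2))).
  by apply: is_derive_eq; rewrite /GRing.scale /=; field.
have df_ge0 y : 0 <= y <= a ->
    0 <= (y * (expR y + expR (- y)) - (expR y - expR (- y))) * expR (- (y * y / 2)).
  by move=> /andP[y_ge0 _]; rewrite mulr_ge0 ?expR_ge0 // subr_ge0 sinh_le_mul_cosh.
have := ler_is_derive_ge0 a_ge0 f_df df_ge0.
rewrite /f !mul0r oppr0 !expR0 mulr1 lerN2 [expR (- (_ / 2))]expRN.
by rewrite ler_pdivrMr ?expR_gt0 //; lra.
Qed.

Lemma expR_ge_inv8 (L : R) : L <= 3 / 2 -> 8^-1 <= expR (- L).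
Proof.
move=> L_le.
have half : 2^-1 <= expR (- 2^-1) :> R.
  by have := expR_ge1Dx (- 2^-1 : R); rewrite (_ : 1 + - 2^-1 = 2^-1) //; field.
apply: le_trans (_ : expR (- 2^-1 + - 2^-1 + - 2^-1) <= _); last by rewrite ler_expR; lra.
rewrite !expRD (_ : 8^-1 = 2^-1 * 2^-1 * 2^-1); last by field.
by rewrite !ler_pM ?mulr_ge0 ?invr_ge0 ?ler0n.
Qed.

Local Open Scope convex_scope.

Lemma expR_le_chord (l c y : R) : 0 < c -> `|y| <= c ->
  expR (l * y)
    <= (c - y) / (2 * c) * expR (- (l * c)) + (c + y) / (2 * c) * expR (l * c).
Proof.
move=> c_gt0; rewrite ler_norml => /andP[y_ge y_le].
have t_ge0 : 0 <= (c - y) / (2 * c) by rewrite divr_ge0 //; lra.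
have t_le1 : (c - y) / (2 * c) <= 1 by rewrite ler_pdivrMr; lra.
have := @convex_expR R (Itv01 t_ge0 t_le1) (- (l * c)) (l * c).
rewrite !convRE /= /unstable.onem.
rewrite (_ : _ * - (l * c) + _ = l * y); last by field; lra.
by rewrite (_ : 1 - _ = (c + y) / (2 * c)) //; field; lra.
Qed.

Lemma hoeffding_mean n (Y : 'I_n -> R) (l c : R) : (0 < n)%N ->
  mean Y = 0 -> (forall i, `|Y i| <= c) ->
  mean (fun i => expR (l * Y i)) <= expR ((l * c) ^+ 2 / 2).
Proof.
move=> n_gt0 Y_mean0 Y_le.
have c_ge0 : 0 <= c.
  by case: n n_gt0 Y Y_mean0 Y_le => // n _ Y _ /(_ ord0); apply: le_trans.
have [c_gt0|c_le0] := ltP 0 c; last first.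
  have Y0 i : Y i = 0.
    by apply/normr0_eq0/le_anti; rewrite normr_ge0 (le_trans (Y_le i)).
  rewrite (_ : (fun i => _) = fun=> 1); last by apply/funext => i; rewrite Y0 mulr0 expR0.
  by rewrite mean_cst // -[X in X <= _]expR0 ler_expR divr_ge0 ?sqr_ge0.
apply: le_trans (ler_mean (fun i => expR_le_chord l c_gt0 (Y_le i))) _.
rewrite (_ : (fun i => _) = fun i => (expR (l * c) + expR (- (l * c))) / 2
    + (expR (l * c) - expR (- (l * c))) / (2 * c) * Y i); last first.
  by apply/funext => i; field; rewrite gt_eqF.
rewrite meanD mean_cst // meanZ Y_mean0 mulr0 addr0.
by have := cosh_le_expR_sqr (l * c); lra.
Qed.

End ExpInequalities.

Section McDiarmid.
Variables (R : realType) (n : nat).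
Hypothesis n_gt0 : (0 < n)%N.

Definition bounded_diff k (G : seq 'I_n -> R) (c : R) :=
  forall p q i j, (size p + size q).+1 = k ->
    `|G (p ++ i :: q) - G (p ++ j :: q)| <= c.

Lemma bounded_diff_cons k G c i :
  bounded_diff k.+1 G c -> bounded_diff k (fun s => G (i :: s)) c.
Proof. by move=> G_bd p q y y' pq; apply: (G_bd (i :: p)); rewrite /= addSn pq. Qed.

Lemma bounded_diff_avg_head k G c : bounded_diff k.+1 G c ->
  forall i j, `|avg k (fun s => G (i :: s)) - avg k (fun s => G (j :: s))| <= c.
Proof.
move=> G_bd i j; rewrite -avgB ler_norml.
have G_ij s : size s = k -> - c <= G (i :: s) - G (j :: s) <= c.
  by move=> sk; rewrite -ler_norml; apply: (G_bd [::]); rewrite /= sk.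
apply/andP; split.
- by rewrite -(avg_cst n_gt0 k (- c)); apply: ler_avg => s /G_ij /andP[].
- by rewrite -(avg_cst n_gt0 k c); apply: ler_avg => s /G_ij /andP[].
Qed.

Lemma avg_expR_dev_le k G (c l : R) : 0 <= c -> bounded_diff k G c ->
  avg k (fun s => expR (l * (G s - avg k G))) <= expR (k%:R * (l * c) ^+ 2 / 2).
Proof.
(* Condition on the first draw: Hoeffding's lemma bounds the fluctuation of
   the conditional means, the induction hypothesis the rest. *)
move=> c_ge0; elim: k G => [|k IHk] G G_bd /=.
  by rewrite subrr mulr0 mul0r mul0r expR0.
set cond := fun i => avg k (fun s => G (i :: s)).
set K := expR (k%:R * (l * c) ^+ 2 / 2).
have cond_dev i : `|cond i - mean cond| <= c.
  by apply: mean_dev_le => // j j'; apply: bounded_diff_avg_head.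
have cond_mean0 : mean (fun i => cond i - mean cond) = 0.
  by rewrite meanB mean_cst // subrr.
apply: le_trans (_ : mean (fun i => K * expR (l * (cond i - mean cond))) <= _).
  apply: ler_mean => i.
  rewrite (eq_avg (H := fun s => expR (l * (cond i - mean cond))
      * expR (l * (G (i :: s) - cond i)))); last first.
    by move=> s _; rewrite -expRD -mulrDr; congr (expR (l * _)); ring.
  rewrite avgZ mulrC ler_wpM2r ?expR_ge0 //.
  exact/IHk/bounded_diff_cons.
rewrite meanZ (_ : k.+1%:R * _ / 2 = k%:R * (l * c) ^+ 2 / 2 + (l * c) ^+ 2 / 2).
  by rewrite expRD ler_wpM2l ?expR_ge0 // hoeffding_mean.
by rewrite -natr1; ring.
Qed.

Lemma mcdiarmid k G (c a : R) : (0 < k)%N -> 0 < c -> bounded_diff k G c ->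
  avg k G <= a ->
  avg k (fun s => (a < G s)%R%:R)
    <= expR (- ((a - avg k G) ^+ 2 / (2 * k%:R * c ^+ 2))).
Proof.
move=> k_gt0 c_gt0 G_bd mu_le.
set mu := avg k G; set l := (a - mu) / (k%:R * c ^+ 2).
have l_ge0 : 0 <= l by rewrite divr_ge0 ?subr_ge0 // mulr_ge0 ?ler0n ?sqr_ge0.
apply: le_trans (_ : avg k (fun s =>
  expR (- (l * (a - mu))) * expR (l * (G s - mu))) <= _).
  apply: ler_avg => s _; rewrite -expRD; case: ltP => [a_lt|_] /=; last exact: expR_ge0.
  by rewrite -[X in X <= _]expR0 ler_expR -mulrN -mulrDr mulr_ge0 //; lra.
rewrite avgZ.
apply: le_trans (ler_wpM2l (expR_ge0 _) (avg_expR_dev_le l (ltW c_gt0) G_bd)) _.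
rewrite -expRD ler_expR le_eqVlt; apply/orP; left; apply/eqP.
have k_neq0 : k%:R != 0 :> R by rewrite pnatr_eq0 -lt0n.
by rewrite /l; field; rewrite k_neq0 gt_eqF.
Qed.

End McDiarmid.

Section CAT0.
Variables (R : realType) (M : Type) (d : M -> M -> R) (geo : M -> M -> R -> M).
Hypothesis hM : is_CAT0 d.
Hypothesis hgeo : forall x y, is_geodesic d (geo x y) x y.

Lemma dist_ge0 x y : 0 <= d x y.
Proof. by case: hM => [[]]. Qed.

Lemma dist_sym x y : d x y = d y x.
Proof. by case: hM => [[_ [_ []]]]. Qed.

Lemma dist_triangle x y z : d x z <= d x y + d y z.
Proof. by case: hM => [[_ [_ [_]]]]. Qed.

Lemma dist_diff_le u v w : `|d u w - d v w| <= d u v.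
Proof.
rewrite ler_norml; have := dist_triangle u v w; have := dist_triangle v u w.
by rewrite (dist_sym v u); lra.
Qed.

Lemma is_geodesic_rev (g : R -> M) x y :
  is_geodesic d g x y -> is_geodesic d (fun s => g (1 - s)) y x.
Proof.
case=> g0 [g1 g_dist]; split; first by rewrite subr0.
split; first by rewrite subrr.
move=> s u /andP[s_ge0 s_le1] /andP[u_ge0 u_le1].
rewrite g_dist; first by rewrite (dist_sym x y) -normrN; congr (`|_| * _); ring.
all: by apply/andP; split; lra.
Qed.

Lemma sqr_dist_geo_le a y z t : 0 <= t <= 1 ->
  d (geo a y t) z ^+ 2
    <= (1 - t) * d a z ^+ 2 + t * d y z ^+ 2 - t * (1 - t) * d a y ^+ 2.
Proof.
move=> t_itv; case: hM => _ _ _ /(_ a y z _ _ t 1 (hgeo a y) (hgeo a z) t_itv).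
case: (hgeo a z) => _ [-> _]; rewrite ler01 lexx => /(_ erefl).
by move/le_trans; apply; rewrite le_eqVlt; apply/orP; left; apply/eqP; ring.
Qed.

Lemma dist_geo_le_end c y y' t : 0 <= t <= 1 ->
  d (geo c y t) (geo c y' t) <= t * d y y'.
Proof.
move=> t_itv; have t_ge0 : 0 <= t by case/andP: t_itv.
case: hM => _ _ _ /(_ c y y' _ _ t t (hgeo c y) (hgeo c y') t_itv t_itv).
rewrite (_ : t ^+ 2 * d c y ^+ 2 + t ^+ 2 * d c y' ^+ 2
  - t * t * (d c y ^+ 2 + d c y' ^+ 2 - d y y' ^+ 2) = (t * d y y') ^+ 2); last by ring.
by move=> h; rewrite -(@ler_pXn2r _ 2) ?nnegrE ?mulr_ge0 ?dist_ge0.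
Qed.

Lemma dist_geo_le_start c c' y t : 0 <= t <= 1 ->
  d (geo c y t) (geo c' y t) <= (1 - t) * d c c'.
Proof.
move=> /andP[t_ge0 t_le1].
have s_itv : 0 <= 1 - t <= 1 by apply/andP; split; lra.
case: hM => _ _ _ /(_ y c c' _ _ (1 - t) (1 - t)
  (is_geodesic_rev (hgeo c y)) (is_geodesic_rev (hgeo c' y)) s_itv s_itv).
rewrite /= (_ : 1 - (1 - t) = t); last by ring.
rewrite (_ : (1 - t) ^+ 2 * d y c ^+ 2 + (1 - t) ^+ 2 * d y c' ^+ 2
  - (1 - t) * (1 - t) * (d y c ^+ 2 + d y c' ^+ 2 - d c c' ^+ 2)
  = ((1 - t) * d c c') ^+ 2); last by ring.
by move=> h; rewrite -(@ler_pXn2r _ 2) ?nnegrE ?mulr_ge0 ?dist_ge0 ?subr_ge0.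
Qed.

Local Notation ibary := (iter_bary_aux geo (fun k : nat => k%:R^-1)).

Lemma invSn_itv01 k : 0 <= (k.+1%:R : R)^-1 <= 1.
Proof. by rewrite invr_ge0 ler0n invf_le1 ?ltr0n // ler1n. Qed.

Lemma iter_bary_aux_lipschitz_start k c c' s :
  (k%:R + (size s)%:R) * d (ibary k c s) (ibary k c' s) <= k%:R * d c c'.
Proof.
elim: s k c c' => [|y s IHs] k c c' /=; first by rewrite addr0.
rewrite (_ : k%:R + _ = k.+1%:R + (size s)%:R); last by rewrite -!natr1; ring.
apply: le_trans (IHs _ _ _) _.
have := ler_wpM2l (ler0n R k.+1) (dist_geo_le_start c c' y (invSn_itv01 k)).
by rewrite mulrA mulrBr mulr1 mulfV ?pnatr_eq0 // -natr1 addrK.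
Qed.

Lemma iter_bary_aux_lipschitz_entry k c p q y y' :
  (k%:R + (size p)%:R + (size q)%:R + 1)
    * d (ibary k c (p ++ y :: q)) (ibary k c (p ++ y' :: q)) <= d y y'.
Proof.
elim: p k c => [|z p IHp] k c /=.
  rewrite (_ : _ + 1 = k.+1%:R + (size q)%:R); last by rewrite -!natr1; ring.
  apply: le_trans (iter_bary_aux_lipschitz_start _ _ _ _) _.
  have := ler_wpM2l (ler0n R k.+1) (dist_geo_le_end c y y' (invSn_itv01 k)).
  by rewrite mulrA mulfV ?pnatr_eq0 // mul1r.
by rewrite (_ : k%:R + _ = k.+1%:R + (size p)%:R) ?IHp //; rewrite -!natr1; ring.
Qed.

Variables (n : nat) (x : 'I_n -> M) (b : M).
Hypothesis hn : (0 < n)%N.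

Definition frechet (w : M) : R := mean (fun i => d (x i) w ^+ 2).

Hypothesis hb : forall w, frechet b <= frechet w.

Lemma variance_ineq z : frechet b + d b z ^+ 2 <= frechet z.
Proof.
set dl := d b z ^+ 2.
have dl_ge0 : 0 <= dl by exact: sqr_ge0.
have near_b t : 0 < t <= 1 -> frechet b <= frechet z - (1 - t) * dl.
  move=> /andP[t_gt0 t_le1].
  have : frechet b <= (1 - t) * frechet b + t * frechet z - t * (1 - t) * dl.
    apply: le_trans (hb (geo b z t)) _.
    rewrite (_ : _ - _ = mean (fun i => (1 - t) * d (x i) b ^+ 2
        + t * d (x i) z ^+ 2 - t * (1 - t) * dl)); last first.
      by rewrite meanB meanD !meanZ mean_cst.
    apply: ler_mean => i; rewrite !(dist_sym (x i)).
    by apply: sqr_dist_geo_le; rewrite ltW.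
  by move=> h; rewrite -(ler_pM2l t_gt0); lra.
apply/ler_addgt0Pr => e e_gt0.
set t := e / (e + dl).
have t_itv : 0 < t <= 1 by rewrite divr_gt0 ?ler_pdivrMr /=; lra.
have tdl_le : t * dl <= e by rewrite mulrAC ler_pdivrMr; nra.
by have := near_b t t_itv; lra.
Qed.

Lemma mean_sqr_dist_geo_le k c :
  k.+1%:R ^+ 2 * mean (fun i => d (geo c (x i) k.+1%:R^-1) b ^+ 2)
    <= k%:R ^+ 2 * d c b ^+ 2 + frechet b.
Proof.
set t := k.+1%:R^-1; set K := k%:R.
have tE : t = (K + 1)^-1 by rewrite /t -natr1.
have K_ge0 : 0 <= K by exact: ler0n.
have mean_le : mean (fun i => d (geo c (x i) t) b ^+ 2)
    <= (1 - t) * d c b ^+ 2 + t * frechet b - t * (1 - t) * frechet c.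
  rewrite (_ : _ - _ = mean (fun i => (1 - t) * d c b ^+ 2
      + t * d (x i) b ^+ 2 - t * (1 - t) * d (x i) c ^+ 2)); last first.
    by rewrite meanB meanD !meanZ mean_cst.
  apply: ler_mean => i; rewrite (dist_sym (x i) c).
  exact: sqr_dist_geo_le (invSn_itv01 k).
have var_c : frechet b + d c b ^+ 2 <= frechet c.
  by rewrite dist_sym; exact: variance_ineq.
rewrite -natr1 -/K.
apply: le_trans (ler_wpM2l (sqr_ge0 _) mean_le) _.
rewrite (_ : _ * (_ - _)
  = (K + 1) * K * d c b ^+ 2 + (K + 1) * frechet b - K * frechet c).
  by have := ler_wpM2l K_ge0 var_c; lra.
by rewrite tE; field; lra.
Qed.

Lemma iter_bary_aux_sqr_dist_le j k c :
  (k%:R + j%:R) ^+ 2 * avg j (fun s => d (ibary k c (map x s)) b ^+ 2)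
    <= k%:R ^+ 2 * d c b ^+ 2 + j%:R * frechet b.
Proof.
elim: j k c => [|j IHj] k c /=; first by rewrite addr0 mul0r addr0.
rewrite (_ : k%:R + _ = k.+1%:R + j%:R); last by rewrite -!natr1; ring.
rewrite -meanZ; apply: le_trans (ler_mean (fun i => IHj k.+1 _)) _.
rewrite meanD meanZ mean_cst //.
by have := mean_sqr_dist_geo_le k c; rewrite -[j.+1%:R]natr1; lra.
Qed.

Definition sample_bary (s : seq 'I_n) : M :=
  iter_bary geo (fun k => k%:R^-1) b (map x s).

Lemma avg_sqr_dist_sample_bary_le m : (0 < m)%N ->
  m%:R * avg m (fun s => d (sample_bary s) b ^+ 2) <= frechet b.
Proof.
case: m => // m _; rewrite /sample_bary /=.
have m1_gt0 : 0 < 1 + m%:R :> R by rewrite addrC natr1 ltr0n.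
rewrite (_ : m.+1%:R = 1 + m%:R); last by rewrite -natr1 addrC.
rewrite -(ler_pM2l m1_gt0) mulrA -expr2 -meanZ.
apply: le_trans (ler_mean (fun i => iter_bary_aux_sqr_dist_le m 1 (x i))) _.
by rewrite meanD meanZ mean_cst // mulr1n expr1n mul1r -/(frechet b); lra.
Qed.

Definition diam : R := \big[Num.max/0]_(i < n) \big[Num.max/0]_(j < n) d (x i) (x j).

Lemma dist_le_diam i j : d (x i) (x j) <= diam.
Proof.
apply: le_trans (le_bigmax _ _ i).
exact: (le_bigmax _ (fun j => d (x i) (x j)) j).
Qed.

Lemma diam_ge0 : 0 <= diam.
Proof. exact: bigmax_ge_id. Qed.

Lemma frechet_le_diam : 2 * frechet b <= diam ^+ 2.
Proof.
have F_le j : frechet b + d (x j) b ^+ 2 <= diam ^+ 2.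
  rewrite (dist_sym (x j)); apply: le_trans (variance_ineq (x j)) _.
  rewrite -[leRHS](mean_cst hn); apply: ler_mean => i.
  by rewrite lerXn2r ?nnegrE ?dist_ge0 ?diam_ge0 // dist_le_diam.
by have := ler_mean F_le; rewrite meanD !(mean_cst hn) -/(frechet b); lra.
Qed.

Lemma bounded_diff_sample_bary m : (0 < m)%N ->
  bounded_diff m (fun s => d (sample_bary s) b) (diam / m%:R).
Proof.
move=> m_gt0 p q i j pq.
apply: le_trans (dist_diff_le _ _ _) _.
rewrite ler_pdivlMr ?ltr0n // mulrC; apply: le_trans (dist_le_diam i j).
rewrite /sample_bary !map_cat; case: p pq => [|i0 p] /= pq.
  have := iter_bary_aux_lipschitz_start 1 (x i) (x j) (map x q).
  by rewrite mul1r size_map -natrD -pq add0n.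
have := iter_bary_aux_lipschitz_entry 1 (x i0) (map x p) (map x q) (x i) (x j).
by rewrite !size_map -pq -!natr1 !natrD; congr (_ * _ <= _); ring.
Qed.

Lemma avg_sqr_dist_sample_bary_le_diam m : (0 < m)%N ->
  2 * m%:R * avg m (fun s => d (sample_bary s) b ^+ 2) <= diam ^+ 2.
Proof.
move=> m_gt0; have := avg_sqr_dist_sample_bary_le m_gt0.
by have := frechet_le_diam; lra.
Qed.

Lemma sample_bary_chebyshev m eta : (0 < m)%N -> 0 < eta ->
  avg m (fun s => (eta < d (sample_bary s) b)%R%:R) * (2 * m%:R * eta ^+ 2)
    <= diam ^+ 2.
Proof.
move=> m_gt0 eta_gt0; set p := avg m _.
have := chebyshev_avg m (fun s => d (sample_bary s) b) eta_gt0; rewrite -/p.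
have := avg_sqr_dist_sample_bary_le_diam m_gt0.
have : 0 < m%:R :> R by rewrite ltr0n.
nra.
Qed.

Lemma sample_bary_tail_mcdiarmid m eta L :
  (0 < m)%N -> 0 < eta -> 0 < diam -> 3 / 2 < L ->
  4 * diam ^+ 2 * L <= m%:R * eta ^+ 2 ->
  avg m (fun s => (eta < d (sample_bary s) b)%R%:R) <= expR (- L).
Proof.
move=> m_gt0 eta_gt0 D_gt0 L_gt m_eta.
set F := fun s => d (sample_bary s) b.
set A := avg m (fun s => F s ^+ 2); set mu := avg m F.
have m_gt0' : 0 < m%:R :> R by rewrite ltr0n.
have A_le : 2 * m%:R * A <= diam ^+ 2 by exact: avg_sqr_dist_sample_bary_le_diam.
have mu_ge0 : 0 <= mu by apply: (avg_ge0 hn) => s; exact: dist_ge0.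
have A_eta : 12 * A <= eta ^+ 2.
  have mA_ge0 : 0 <= m%:R * A.
    by rewrite mulr_ge0 ?ler0n ?(avg_ge0 hn) // => s; exact: sqr_ge0.
  have : 12 * (m%:R * A) <= 8 * L * (m%:R * A) by nra.
  have : 8 * L * (m%:R * A) <= 4 * diam ^+ 2 * L by nra.
  by nra.
(* 29/100 exceeds 1/sqrt 12, and (1 - 29/100)^2 still exceeds 1/2. *)
have mu_le : mu <= 29 / 100 * eta.
  by have := sqr_avg_le hn m F; rewrite -/mu -/A; nra.
have eta_mu : eta ^+ 2 <= 2 * (eta - mu) ^+ 2 by nra.
have tail := mcdiarmid hn m_gt0 (divr_gt0 D_gt0 m_gt0')
  (bounded_diff_sample_bary m_gt0) (_ : mu <= eta).
apply: le_trans (tail _) _; first by lra.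
rewrite ler_expR lerN2 -/mu.
rewrite (_ : (eta - mu) ^+ 2 / (2 * m%:R * (diam / m%:R) ^+ 2)
  = (eta - mu) ^+ 2 * m%:R / (2 * diam ^+ 2)); last by field; rewrite !gt_eqF.
by rewrite ler_pdivlMr ?mulr_gt0 ?exprn_gt0 //; nra.
Qed.

Lemma sample_bary_tail_le m eta delta : (0 < m)%N -> 0 < eta -> 0 < delta ->
  4 * diam ^+ 2 / eta ^+ 2 * Num.max 1 (ln delta^-1) <= m%:R ->
  avg m (fun s => (eta < d (sample_bary s) b)%R%:R) <= delta.
Proof.
move=> m_gt0 eta_gt0 delta_gt0 m_large.
set p := avg m _; set L := ln delta^-1.
have deltaE : delta = expR (- L) by rewrite expRN lnK ?invrK // posrE invr_gt0.
have m_eta : 4 * diam ^+ 2 * Num.max 1 L <= m%:R * eta ^+ 2.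
  by move: m_large; rewrite mulrAC ler_pdivrMr ?exprn_gt0 // mulrC.
have p_ge0 : 0 <= p by apply: (avg_ge0 hn) => s; rewrite ler0n.
have cheb := sample_bary_chebyshev m_gt0 eta_gt0; rewrite -/p in cheb.
have m_gt0' : 0 < m%:R :> R by rewrite ltr0n.
have [D0|D_neq0] := eqVneq diam 0.
  by move: cheb; rewrite D0 expr0n /= pmulr_lle0 ?mulr_gt0 ?exprn_gt0 //; lra.
have D_gt0 : 0 < diam by rewrite lt_def D_neq0 diam_ge0.
have [L_le|L_gt] := lerP L (3 / 2); rewrite deltaE.
- apply: le_trans (expR_ge_inv8 L_le).
  have D2_gt0 : 0 < diam ^+ 2 by exact: exprn_gt0.
  have m_eta4 : 4 * diam ^+ 2 <= m%:R * eta ^+ 2.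
    apply: le_trans m_eta; apply: ler_peMr; first by rewrite mulr_ge0 ?sqr_ge0 ?ler0n.
    by rewrite le_max lexx.
  have : p * 8 <= 1 by nra.
  by rewrite -[8^-1]mul1r ler_pdivlMr ?ltr0n.
- have maxE : Num.max 1 L = L by apply/max_idPr; lra.
  by apply: sample_bary_tail_mcdiarmid => //; rewrite -maxE.
Qed.

End CAT0.

Theorem mainTheorem16 (R : realType) (M : Type) (d : M -> M -> R)
  (geo : M -> M -> R -> M)
  (hM : is_CAT0 d)
  (hgeo : forall x y, is_geodesic d (geo x y) x y)
  (n m : nat) (hn : (0 < n)%N) (hm : (0 < m)%N)
  (x : 'I_n -> M) (b : M)
  (hb : forall c : M, n%:R^-1 * \sum_(i < n) d (x i) b ^+ 2
                      <= n%:R^-1 * \sum_(i < n) d (x i) c ^+ 2)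
  (eta delta : R) (heta : 0 < eta) (hdelta0 : 0 < delta) (hdelta1 : delta < 1) :
  let D := \big[Num.max/0]_(i < n) \big[Num.max/0]_(j < n) d (x i) (x j) in
  4 * D ^+ 2 / eta ^+ 2 * Num.max 1 (ln delta^-1) <= m%:R ->
  1 - delta <=
    #|[set I : {ffun 'I_m -> 'I_n} |
        d (iter_bary geo (fun k => k%:R^-1) b [seq x (I k) | k <- enum 'I_m]) b
          <= eta]|%:R
    / #|{: {ffun 'I_m -> 'I_n}}|%:R.
Proof.
move=> D m_large.
have tail := sample_bary_tail_le hM hgeo hn hb hm heta hdelta0 m_large.
rewrite (@card_ffun_avg _ _ hn m (fun s => d (sample_bary geo x b s) b <= eta));
  last first.
  by move=> I; rewrite inE /sample_bary -(map_comp x I).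
rewrite (@eq_avg _ _ m _ (fun s => 1 - (eta < d (sample_bary geo x b s) b)%R%:R)).
  by rewrite avgB avg_cst //; lra.
by move=> s _; case: ltP => _; rewrite ?subr0 ?subrr.
Qed.
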